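(* Let $0<\beta\leq 1$ and $\delta>0$. There exists a constant $M=M(\beta,\delta)$ such that the following holds for every $0<\alpha<1$, every $d$, and every finite $L$-spherical code $P\subset\mathbb{R}^d$ with $L=[-1,-\beta]\cup\{\alpha\}$. Let $G$ be the graph on vertex set $P$ in which distinct $x,y\in P$ are adjacent iff $\langle x,y\rangle\in[-1,-\beta]$. Let $U\subseteq P$ be arbitrary and let $I$ be a maximum-size independent (in $G$) subset of $U$. Then there is a subset $U'\subseteq U\setminus I$ with $|U'|\geq|U|-M|I|$ such that every vertex of $U'$ is adjacent in $G$ to at least $(1-\delta)|I|$ vertices of $I$.
   Context: For a set $L\subseteq[-1,1]$, an $L$-spherical code in $\mathbb{R}^d$ is a set $P$ of unit vectors such that $\langle x,y\rangle\in L$ for all distinct $x,y\in P$. *)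

From HB Require Import structures.
From mathcomp Require Import all_boot all_order all_algebra.
From mathcomp Require Import finmap.
From mathcomp Require Import reals.
Set Implicit Arguments. Unset Strict Implicit. Unset Printing Implicit Defensive.
Import Order.TTheory GRing.Theory Num.Theory.
Local Open Scope ring_scope.
Local Open Scope fset_scope.

Definition dotv (R : realType) (d : nat) (x y : 'rV[R]_d) : R := (x *m y^T) 0 0.

Definition spherical_code_L (R : realType) (d : nat) (beta alpha : R)
  (P : {fset 'rV[R]_d}) : Prop :=
  (forall x, x \in P -> dotv x x = 1) /\
  (forall x y, x \in P -> y \in P -> x != y ->
     (-1 <= dotv x y /\ dotv x y <= - beta) \/ dotv x y = alpha).

Definition adjG (R : realType) (d : nat) (beta : R) (x y : 'rV[R]_d) : bool :=
  (x != y) && (-1 <= dotv x y) && (dotv x y <= - beta).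

Definition independentG (R : realType) (d : nat) (beta : R)
  (S : {fset 'rV[R]_d}) : Prop :=
  forall x y, x \in S -> y \in S -> ~~ adjG beta x y.

Definition max_independent_in (R : realType) (d : nat) (beta : R)
  (U I : {fset 'rV[R]_d}) : Prop :=
  I `<=` U /\ independentG beta I /\
  (forall J : {fset 'rV[R]_d}, J `<=` U -> independentG beta J -> (#|` J| <= #|` I|)%N).

(* Two Gram-matrix estimates carry the argument.  If a vertex u outside the independent
   set I is non-adjacent to more than an e-fraction of I (e = min delta 1), the squared norm of
   a * (sum of N(u) /\ I) + u + g * (sum of I \ N(u)) is nonnegative, which forces
   |N(u) /\ I| = O(1 / (e beta^2)).  Call such vertices bad.  If some v in I had s0 ~ 3/beta^2
   bad neighbours S, the same estimate for v, S and the common non-neighbours of S in I shows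
   that fewer than (s0 + 1)^2 vertices of I avoid S, whereas by the first estimate at least
   |I| - s0 * O(1 / (e beta^2)) do; so once |I| is large each v in I has fewer than s0 bad
   neighbours, and since every vertex of U \ I has a neighbour in I by maximality, there are at
   most s0 |I| bad vertices.  When |I| is small, Ramsey's theorem bounds |U| directly, as cliques
   of G have at most 1 + 1/beta vertices. *)

From HB Require Import structures.
From mathcomp Require Import all_boot all_order all_algebra.
From mathcomp Require Import finmap.
From mathcomp Require Import reals.
From mathcomp Require Import ring lra zify.
Import Order.TTheory GRing.Theory Num.Theory.
Set Implicit Arguments. Unset Strict Implicit. Unset Printing Implicit Defensive.
Local Open Scope fset_scope.
Local Open Scope ring_scope.

Section DotProduct.
Variables (R : realType) (d : nat).
Implicit Types (x y z : 'rV[R]_d) (A B : seq 'rV[R]_d).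

Lemma dotvE x y : dotv x y = \sum_j x 0 j * y 0 j.
Proof. by rewrite /dotv !mxE; apply: eq_bigr => j _; rewrite mxE. Qed.

Lemma dotvC x y : dotv x y = dotv y x.
Proof. by rewrite !dotvE; apply: eq_bigr => j _; rewrite mulrC. Qed.

Lemma dotvDl x y z : dotv (x + y) z = dotv x z + dotv y z.
Proof. by rewrite !dotvE -big_split; apply: eq_bigr => j _; rewrite !mxE mulrDl. Qed.

Lemma dotvDr x y z : dotv z (x + y) = dotv z x + dotv z y.
Proof. by rewrite dotvC dotvDl !(dotvC z). Qed.

Lemma dotvZl a x z : dotv (a *: x) z = a * dotv x z.
Proof. by rewrite !dotvE mulr_sumr; apply: eq_bigr => j _; rewrite !mxE mulrA. Qed.

Lemma dotvZr a x z : dotv z (a *: x) = a * dotv z x.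
Proof. by rewrite dotvC dotvZl dotvC. Qed.

Lemma dotvv_ge0 x : 0 <= dotv x x.
Proof. by rewrite dotvE; apply: sumr_ge0 => j _; rewrite -expr2 sqr_ge0. Qed.

Lemma dotv_suml A z : dotv (\sum_(x <- A) x) z = \sum_(x <- A) dotv x z.
Proof.
elim: A => [|a A IH]; last by rewrite !big_cons dotvDl IH.
by rewrite !big_nil dotvE big1 // => j _; rewrite mxE mul0r.
Qed.

Lemma sumr_const_seq (T : Type) (r : seq T) (c : R) :
  \sum_(i <- r) c = c * (size r)%:R.
Proof.
elim: r => [|a r IH]; first by rewrite big_nil mulr0.
by rewrite big_cons IH /= -add1n natrD mulrDr mulr1.
Qed.

Lemma dotv_suml_le A z c :
  (forall x, x \in A -> dotv x z <= c) -> dotv (\sum_(x <- A) x) z <= c * (size A)%:R.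
Proof.
move=> le_c; rewrite dotv_suml -sumr_const_seq big_seq [X in _ <= X]big_seq.
exact: ler_sum.
Qed.

Lemma dotv_suml_eq A z c :
  (forall x, x \in A -> dotv x z = c) -> dotv (\sum_(x <- A) x) z = c * (size A)%:R.
Proof.
move=> eq_c; rewrite dotv_suml -sumr_const_seq big_seq [RHS]big_seq.
exact: eq_bigr.
Qed.

Lemma dotv_sumr_eq A z c :
  (forall y, y \in A -> dotv z y = c) -> dotv z (\sum_(y <- A) y) = c * (size A)%:R.
Proof. by move=> eq_c; rewrite dotvC; apply: dotv_suml_eq => y yA; rewrite dotvC eq_c. Qed.

Lemma dotv_sum_sum_eq A B c :
  (forall x y, x \in A -> y \in B -> dotv x y = c) ->
  dotv (\sum_(x <- A) x) (\sum_(y <- B) y) = c * (size B)%:R * (size A)%:R.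
Proof. by move=> eq_c; apply: dotv_suml_eq => x xA; apply: dotv_sumr_eq => y; apply: eq_c. Qed.

Lemma dotv_sum_self_le A c : uniq A ->
  (forall x, x \in A -> dotv x x = 1) ->
  (forall x y, x \in A -> y \in A -> x != y -> dotv x y <= c) ->
  dotv (\sum_(x <- A) x) (\sum_(y <- A) y) <= (1 - c) * (size A)%:R + c * (size A)%:R ^+ 2.
Proof.
move=> uA unit le_c.
have -> : (1 - c) * (size A)%:R + c * (size A)%:R ^+ 2 =
          (1 + c * ((size A)%:R - 1)) * (size A)%:R by ring.
apply: dotv_suml_le => x xA.
rewrite (bigD1_seq x) //= dotvDr unit // lerD2l -big_filter dotvC.
have size_rest : (size A)%:R - 1 = (size [seq y <- A | y != x])%:R :> R.
  have A_gt0 : (0 < size A)%N by case: (A) xA.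
  by rewrite -rem_filter // size_rem // -[in LHS](prednK A_gt0) -natr1 addrK.
rewrite size_rest; apply: dotv_suml_le => y; rewrite mem_filter => /andP[yx yA].
by rewrite le_c // eq_sym.
Qed.

End DotProduct.

(* Expanding |a * sum A + x0 + g * sum B|^2 >= 0 with g = -(1 + a|A|) / |B|, chosen to kill
   the alpha-weighted square, leaves a bound in which alpha no longer appears. *)
Lemma gram_bound (R : realType) (d : nat) (alpha beta a : R) (x0 : 'rV[R]_d)
    (A B : {fset 'rV[R]_d}) :
  0 <= alpha -> 0 <= a -> B != fset0 -> dotv x0 x0 = 1 ->
  (forall x, x \in A -> dotv x x = 1) -> (forall y, y \in B -> dotv y y = 1) ->
  (forall x x', x \in A -> x' \in A -> x != x' -> dotv x x' <= alpha) ->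
  (forall y y', y \in B -> y' \in B -> y != y' -> dotv y y' <= alpha) ->
  (forall x, x \in A -> dotv x x0 <= - beta) ->
  (forall y, y \in B -> dotv x0 y = alpha) ->
  (forall x y, x \in A -> y \in B -> dotv x y = alpha) ->
  2 * a * beta * #|` A|%:R <= a ^+ 2 * #|` A|%:R + 1 + (1 + a * #|` A|%:R) ^+ 2 / #|` B|%:R.
Proof.
move=> alpha_ge0 a_ge0 B_neq0 x0_unit A_unit B_unit AA BB Ax0 x0B AB.
set s := #|` A|%:R; set m := #|` B|%:R.
have m_gt0 : 0 < m by rewrite ltr0n cardfs_gt0.
set sA := \sum_(x <- A) x; set sB := \sum_(y <- B) y.
set g := - (1 + a * s) / m.
have sAsA := dotv_sum_self_le (fset_uniq A) A_unit AA.
have sBsB := dotv_sum_self_le (fset_uniq B) B_unit BB.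
have sAx0 : dotv sA x0 <= - beta * s by apply: dotv_suml_le.
have x0sB : dotv x0 sB = alpha * m by apply: dotv_sumr_eq.
have sAsB : dotv sA sB = alpha * s * m.
  by rewrite mulrAC; apply: dotv_sum_sum_eq.
have := dotvv_ge0 (a *: sA + x0 + g *: sB).
rewrite !(dotvDl, dotvDr, dotvZl, dotvZr) (dotvC x0 sA) (dotvC sB sA) (dotvC sB x0).
rewrite x0_unit sAsB x0sB => gram_ge0.
have gram_ge0' : 0 <= (1 - alpha) * (a ^+ 2 * s + 1 + g ^+ 2 * m)
    + alpha * (a * s + 1 + g * m) ^+ 2 - 2 * a * s * (alpha + beta).
  have h1 : a * (a * dotv sA sA) <= a * (a * ((1 - alpha) * s + alpha * s ^+ 2)).
    by rewrite mulrA mulrA ler_wpM2l ?mulr_ge0.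
  have h2 : a * dotv sA x0 <= a * (- beta * s) by rewrite ler_wpM2l.
  have h3 : g * (g * dotv sB sB) <= g * (g * ((1 - alpha) * m + alpha * m ^+ 2)).
    by rewrite mulrA mulrA ler_wpM2l // -expr2 sqr_ge0.
  lra.
have gm : g * m = - (1 + a * s) by rewrite /g divfK // gt_eqF.
have g2m : g ^+ 2 * m = (1 + a * s) ^+ 2 / m.
  by rewrite expr2 -mulrA gm /g; field; rewrite gt_eqF.
rewrite gm g2m in gram_ge0'.
have Q_ge0 : 0 <= (1 + a * s) ^+ 2 / m by rewrite divr_ge0 ?sqr_ge0 ?ltW.
have as_ge0 : 0 <= a * s by rewrite mulr_ge0.
have alpha_as : 0 <= alpha * (a * s) by rewrite mulr_ge0.
have alpha_X : 0 <= alpha * (a ^+ 2 * s + 1 + (1 + a * s) ^+ 2 / m).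
  by rewrite mulr_ge0 // !addr_ge0 // mulr_ge0 // sqr_ge0.
lra.
Qed.

Section Ramsey.
Variables (K : choiceType) (r : rel K).
Hypotheses (r_sym : symmetric r) (r_irr : irreflexive r).

Definition fclique (Y : {fset K}) := {in Y &, forall x y, x != y -> r x y}.
Definition fstable (Y : {fset K}) := {in Y &, forall x y, ~~ r x y}.

Lemma fclique_fsetU1 x Y : fclique Y -> {in Y, forall y, r x y} -> fclique (x |` Y).
Proof.
move=> clY rxY y z; rewrite !inE => /predU1P[-> | yY] /predU1P[-> | zY].
- by rewrite eqxx.
- by move=> _; apply: rxY.
- by move=> _; rewrite r_sym; apply: rxY.
- exact: clY.
Qed.

Lemma fstable_fsetU1 x Y : fstable Y -> {in Y, forall y, ~~ r x y} -> fstable (x |` Y).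
Proof.
move=> stY nrxY y z; rewrite !inE => /predU1P[-> | yY] /predU1P[-> | zY].
- by rewrite r_irr.
- exact: nrxY.
- by rewrite r_sym; apply: nrxY.
- exact: stY.
Qed.

Lemma fclique0 : fclique fset0. Proof. by move=> x y; rewrite inE. Qed.
Lemma fstable0 : fstable fset0. Proof. by move=> x y; rewrite inE. Qed.

Lemma ramsey_fset p q (X : {fset K}) : (2 ^ (p + q) <= #|` X|)%N ->
  (exists2 Y, Y `<=` X & (p <= #|` Y|)%N /\ fclique Y) \/
  (exists2 Y, Y `<=` X & (q <= #|` Y|)%N /\ fstable Y).
Proof.
have [n le_pq_n] : exists n, (p + q <= n)%N by exists (p + q)%N.
elim: n p q X le_pq_n => [|n IH] [|p] [|q] X //= le_pqn bigX;
  try by [left; exists fset0; rewrite ?fsub0set ?fclique0 |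
          right; exists fset0; rewrite ?fsub0set ?fstable0].
have /fset0Pn [x xX] : X != fset0.
  by rewrite -cardfs_gt0; apply: leq_trans bigX; rewrite expn_gt0.
set N := [fset y in X | r x y]; set Nn := [fset y in X | (y != x) && ~~ r x y].
have NX : N `<=` X := fset_sub _ _.
have NnX : Nn `<=` X := fset_sub _ _.
have xN : x \notin N by rewrite /N !inE /= r_irr andbF.
have xNn : x \notin Nn by rewrite /Nn !inE /= eqxx andbF.
have card_X : #|` X| = (#|` N| + #|` Nn|).+1.
  have -> : X = x |` (N `|` Nn).
    apply/fsetP => y; rewrite !inE; have [-> | yx] := eqVneq y x; first by rewrite xX.
    by case: (y \in X); case: (r x y).
  rewrite cardfsU1 inE negb_or xN xNn cardfsU.
  suff -> : N `&` Nn = fset0 by rewrite cardfs0 subn0.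
  by apply/fsetP => y; rewrite !inE; case: (r x y); rewrite ?andbF.
have [bigN | smallN] := leqP (2 ^ (p + q.+1)) #|` N|.
  have [[Y YN [pY clY]] | [Y YN [qY stY]]] := IH p q.+1 N ltac:(lia) bigN.
    left; exists (x |` Y); first by rewrite fsubUset fsub1set xX (fsubset_trans YN NX).
    split; first by rewrite cardfsU1 (contra (fsubsetP YN x)).
    by apply: fclique_fsetU1 => // y /(fsubsetP YN); rewrite /N !inE /= => /andP[].
  by right; exists Y; [exact: fsubset_trans YN NX | split].
have bigNn : (2 ^ (p.+1 + q) <= #|` Nn|)%N.
  by move: smallN bigX; rewrite card_X addSn addnS !expnS; lia.
have [[Y YNn [pY clY]] | [Y YNn [qY stY]]] := IH p.+1 q Nn ltac:(lia) bigNn.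
  by left; exists Y; [exact: fsubset_trans YNn NnX | split].
right; exists (x |` Y); first by rewrite fsubUset fsub1set xX (fsubset_trans YNn NnX).
split; first by rewrite cardfsU1 (contra (fsubsetP YNn x)).
by apply: fstable_fsetU1 => // y /(fsubsetP YNn); rewrite /Nn !inE /= => /and3P[].
Qed.

End Ramsey.

Lemma card_bigfcup_le (K : choiceType) (I : Type) (r : seq I) (F : I -> {fset K}) :
  (#|` \bigcup_(i <- r) F i| <= \sum_(i <- r) #|` F i|)%N.
Proof.
elim: r => [|a r IH]; first by rewrite !big_nil cardfs0.
by rewrite !big_cons (leq_trans (leq_card_fsetU _ _).1) // leq_add2l.
Qed.

Lemma fsubset_card_eq (K : choiceType) (X : {fset K}) n :
  (n <= #|` X|)%N -> exists2 S : {fset K}, S `<=` X & #|` S| = n.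
Proof.
move=> le_nX; exists [fset x in take n X].
  by apply/fsubsetP => x; rewrite inE => /mem_take.
by rewrite card_fseq undup_id ?take_uniq ?fset_uniq // size_take_min; apply/minn_idPl.
Qed.

Lemma adjG_sym (R : realType) (d : nat) (beta : R) : symmetric (@adjG R d beta).
Proof. by move=> x y; rewrite /adjG eq_sym dotvC. Qed.

Lemma adjG_irr (R : realType) (d : nat) (beta : R) : irreflexive (@adjG R d beta).
Proof. by move=> x; rewrite /adjG eqxx. Qed.

Lemma gram_bound_few_nbrs (R : realFieldType) (beta e t m : R) :
  0 < e -> e <= 1 -> 0 <= t -> 1 <= m -> e * t < m ->
  let a := e * beta / 4 in
  2 * a * beta * t <= a ^+ 2 * t + 1 + (1 + a * t) ^+ 2 / m ->
  e * beta ^+ 2 * t <= 10.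
Proof.
move=> e_gt0 e_le1 t_ge0 m_ge1 et_lt_m a gram.
have m_gt0 : 0 < m by lra.
set X := e * beta ^+ 2 * t.
have X_ge0 : 0 <= X by rewrite /X mulr_ge0 // mulr_ge0 ?sqr_ge0 // ltW.
have quad_le : (1 + a * t) ^+ 2 / m <= 2 + X / 8.
  rewrite ler_pdivrMr //.
  have sq_le : (1 + a * t) ^+ 2 <= 2 + X * (e * t) / 8.
    have := sqr_ge0 (1 - a * t); have -> : X * (e * t) / 8 = 2 * (a * t) ^+ 2.
      by rewrite /X /a; field.
    by rewrite !expr2; lra.
  have : X * (e * t) <= X * m by rewrite ler_wpM2l // ltW.
  by lra.
have a2t : a ^+ 2 * t = X * e / 16 by rewrite /X /a; field.
have abt : 2 * a * beta * t = X / 2 by rewrite /X /a; field.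
have : X * e <= X by rewrite -[leRHS]mulr1 ler_wpM2l.
by rewrite a2t abt in gram; lra.
Qed.

Lemma gram_bound_star_absurd (R : realFieldType) (beta s m : R) :
  0 < beta -> beta <= 1 -> 0 <= s -> 3 <= beta ^+ 2 * s -> (s + 1) ^+ 2 <= m ->
  ~ 2 * beta * beta * s <= beta ^+ 2 * s + 1 + (1 + beta * s) ^+ 2 / m.
Proof.
move=> beta_gt0 beta_le1 s_ge0 big_s big_m gram.
have m_gt0 : 0 < m by apply: lt_le_trans big_m; rewrite exprn_gt0 //; lra.
have : (1 + beta * s) ^+ 2 / m <= 1.
  rewrite ler_pdivrMr // mul1r; apply: le_trans big_m.
  rewrite ler_sqr ?nnegrE; first by rewrite addrC lerD2r ler_piMl.
  - by rewrite addr_ge0 // mulr_ge0 // ltW.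
  - by rewrite addr_ge0.
by rewrite expr2 in gram; lra.
Qed.

Section SphericalCode.
Variables (R : realType) (d : nat) (beta alpha : R) (P : {fset 'rV[R]_d}).
Hypotheses (alpha_gt0 : 0 < alpha) (beta_gt0 : 0 < beta) (beta_le1 : beta <= 1).
Hypothesis codeP : spherical_code_L beta alpha P.

Implicit Types (x y u v : 'rV[R]_d) (I Y : {fset 'rV[R]_d}).

Local Notation adj := (adjG beta).

Lemma code_unit x : x \in P -> dotv x x = 1.
Proof. by case: codeP => unit _; apply: unit. Qed.

Lemma dotv_adj x y : adj x y -> dotv x y <= - beta.
Proof. by case/andP. Qed.

Lemma dotv_nonadj x y : x \in P -> y \in P -> x != y -> ~~ adj x y -> dotv x y = alpha.
Proof.
case: codeP => _ dotP xP yP xy; case: (dotP x y xP yP xy) => [[ge_m1 le_mb] | //].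
by rewrite /adjG xy ge_m1 le_mb.
Qed.

Lemma dotv_le_alpha x y : x \in P -> y \in P -> x != y -> dotv x y <= alpha.
Proof.
case: codeP => _ dotP xP yP xy; case: (dotP x y xP yP xy) => [[_ le_mb] | -> //].
by apply: (le_trans le_mb); rewrite ltW // (lt_trans _ alpha_gt0) // oppr_lt0.
Qed.

Lemma clique_card_le (Y : {fset 'rV[R]_d}) :
  Y `<=` P -> fclique adj Y -> beta * (#|` Y|%:R - 1) <= 1.
Proof.
move=> /fsubsetP YP clY.
have sum_ge0 := dotvv_ge0 (\sum_(x <- Y) x).
have := dotv_sum_self_le (fset_uniq Y) (fun x xY => code_unit (YP x xY))
  (fun x y xY yY xy => dotv_adj (clY x y xY yY xy)).
set n := #|` Y|%:R => sum_le.
have [-> | n_neq0] := eqVneq n 0; first by have := beta_gt0; lra.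
have n_gt0 : 0 < n by rewrite lt_def n_neq0 ler0n.
have : 0 <= n * (1 - beta * (n - 1)) by lra.
by rewrite pmulr_rge0 //; lra.
Qed.

(* [gram_bound] for u, its neighbours in I and the rest of I, with a = e beta / 4. *)
Lemma card_nbrs_le_of_many_nonnbrs I u e :
  I `<=` P -> fstable adj I -> u \in P -> u \notin I -> 0 < e -> e <= 1 ->
  e * #|` I|%:R < #|` I `\` [fset v in I | adj u v]|%:R ->
  e * beta ^+ 2 * #|` [fset v in I | adj u v]|%:R <= 10.
Proof.
move=> /fsubsetP IP stI uP uI e_gt0 e_le1 many_nonnbrs.
set A := [fset v in I | adj u v] in many_nonnbrs *; set B := I `\` A in many_nonnbrs.
have memA v : v \in A -> v \in I /\ adj u v by rewrite /A !inE /= => /andP.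
have memB v : v \in B -> v \in I /\ ~~ adj u v.
  by rewrite in_fsetD => /andP[vA vI]; move: vA; rewrite /A !inE /= vI.
have m_gt0 : 0 < #|` B|%:R :> R.
  by apply: (le_lt_trans _ many_nonnbrs); rewrite mulr_ge0 // ltW.
apply: (@gram_bound_few_nbrs _ _ _ _ #|` B|%:R e_gt0 e_le1) => //.
- by rewrite ler1n -(ltr0n R).
- apply: (le_lt_trans _ many_nonnbrs); apply: ler_wpM2l; first exact: ltW.
  by rewrite ler_nat fsubset_leq_card ?fset_sub.
apply: (gram_bound (x0 := u) (ltW alpha_gt0)).
- by rewrite divr_ge0 // mulr_ge0 // ltW.
- by rewrite -cardfs_gt0 -(ltr0n R).
- exact: code_unit.
- by move=> x /memA[/IP /code_unit].
- by move=> y /memB[/IP /code_unit].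
- by move=> x x' /memA[/IP xP _] /memA[/IP x'P _]; apply: dotv_le_alpha.
- by move=> y y' /memB[/IP yP _] /memB[/IP y'P _]; apply: dotv_le_alpha.
- by move=> x /memA[_ ux]; rewrite dotvC dotv_adj.
- move=> y /memB[yI nuy]; apply: dotv_nonadj => //; first exact: IP.
  by apply: contraNneq uI => ->.
move=> x y xA yB; have [xI _] := memA x xA; have [yI _] := memB y yB.
apply: dotv_nonadj; rewrite ?IP ?stI //.
by apply: contraTneq xA => ->; move: yB; rewrite in_fsetD => /andP[].
Qed.

(* [gram_bound] for v, S and the common non-neighbours of S in I, with a = beta. *)
Lemma card_common_nonnbrs_lt I S v :
  I `<=` P -> fstable adj I -> v \in I -> S `<=` P -> {in S, forall u, adj u v} ->
  3 <= beta ^+ 2 * #|` S|%:R ->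
  #|` [fset w in I | all (fun u => ~~ adj u w) S]|%:R < (#|` S|%:R + 1 : R) ^+ 2.
Proof.
move=> /fsubsetP IP stI vI /fsubsetP SP Sv big_S.
set B := [fset w in I | _].
have memB w : w \in B -> w \in I /\ {in S, forall u, ~~ adj u w}.
  by rewrite /B !inE /= => /andP[wI /allP].
have SI u : u \in S -> u \notin I.
  by move=> uS; apply: contraL (Sv u uS) => uI; apply: stI.
have [u0 u0S] : exists u0, u0 \in S.
  apply/fset0Pn; rewrite -cardfs_gt0; move: big_S.
  by case: #|` S| => //; rewrite mulr0; lra.
rewrite ltNge; apply/negP => big_B.
apply: (gram_bound_star_absurd beta_gt0 beta_le1 (ler0n _ _) big_S big_B).
apply: (gram_bound (x0 := v) (ltW alpha_gt0) (ltW beta_gt0)).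
- rewrite -cardfs_gt0 -(ltr0n R); apply: lt_le_trans big_B.
  by rewrite exprn_gt0 // ltr_wpDl.
- exact/code_unit/IP.
- by move=> x /SP /code_unit.
- by move=> y /memB[/IP /code_unit].
- by move=> x x' /SP xP /SP x'P; apply: dotv_le_alpha.
- by move=> y y' /memB[/IP yP _] /memB[/IP y'P _]; apply: dotv_le_alpha.
- by move=> x /Sv /dotv_adj.
- move=> y /memB[yI nSy]; apply: dotv_nonadj; rewrite ?IP ?stI //.
  by apply/eqP => vy; move: (nSy u0 u0S); rewrite -vy Sv.
move=> x y xS /memB[yI nSy]; apply: dotv_nonadj; [exact: SP | exact: IP | | exact: nSy].
by apply: contraNneq (SI x xS) => ->.
Qed.

Section MaxIndependent.
Variables U I : {fset 'rV[R]_d}.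
Hypotheses (UP : U `<=` P) (maxI : max_independent_in beta U I).

Lemma max_independent_nbr u : u \in U `\` I -> exists2 v, v \in I & adj u v.
Proof.
case: maxI => IU [stI max_card]; rewrite in_fsetD => /andP[uI uU].
apply/hasP; apply: contraT => /hasPn nadj_u.
have : (#|` u |` I| <= #|` I|)%N.
  apply: max_card; first by rewrite fsubUset fsub1set uU.
  by apply: fstable_fsetU1 (@adjG_sym _ _ _) (@adjG_irr _ _ _) _ _ stI _.
by rewrite cardfsU1 uI ltnn.
Qed.

Lemma card_le_of_card_independent_lt T k :
  1 < beta * (T%:R - 1) -> (#|` I| < k)%N -> (#|` U| <= 2 ^ (T + k) * #|` I|)%N.
Proof.
case: maxI => IU [stI max_card] big_T small_I.
have [I0 | I_gt0] := posnP #|` I|.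
  suff -> : U = fset0 by rewrite cardfs0.
  apply/fsetP => u; rewrite inE; apply/negP => uU.
  move/eqP: I0; rewrite cardfs_eq0 => /eqP I0.
  have uUI : u \in U `\` I by rewrite in_fsetD uU I0 inE.
  by have [v] := max_independent_nbr uUI; rewrite I0 inE.
suff U_small : (#|` U| < 2 ^ (T + k))%N by rewrite -[leqLHS]muln1 leq_mul // ltnW.
rewrite ltnNge; apply/negP => big_U.
have [[Y YU [TY clY]] | [Y YU [kY stY]]] :=
  ramsey_fset (@adjG_sym R d beta) (@adjG_irr R d beta) big_U.
  have := clique_card_le (fsubset_trans YU UP) clY.
  have : beta * (T%:R - 1) <= beta * (#|` Y|%:R - 1).
    by apply: ler_wpM2l; [exact: ltW | rewrite lerD2r ler_nat].
  by move: big_T; lra.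
by have := leq_trans kY (max_card Y YU stY); rewrite leqNgt small_I.
Qed.

Section ManyIndependent.
Variables (e : R) (s0 k0 : nat).
Hypotheses (e_gt0 : 0 < e) (e_le1 : e <= 1) (s0_big : 3 <= beta ^+ 2 * s0%:R).
Hypothesis k0_big : s0%:R * (10 / (e * beta ^+ 2)) + (s0%:R + 1) ^+ 2 <= k0%:R.
Hypothesis I_big : (k0 <= #|` I|)%N.

Let nbrs u := [fset v in I | adj u v].
Let bad := [fset u in U `\` I | #|` nbrs u|%:R < (1 - e) * #|` I|%:R].

Lemma card_nbrs_bad_le u : u \in bad -> #|` nbrs u|%:R <= 10 / (e * beta ^+ 2).
Proof.
case: maxI => IU [stI _]; rewrite !inE /= => /andP[/andP[uI uU] few_nbrs].
rewrite ler_pdivlMr ?mulr_gt0 ?exprn_gt0 // mulrC.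
apply: card_nbrs_le_of_many_nonnbrs; rewrite ?(fsubset_trans IU UP) ?(fsubsetP UP) //.
by rewrite cardfsDS ?fset_sub // natrB ?fsubset_leq_card ?fset_sub //; lra.
Qed.

Lemma card_bad_nbrs_lt v : v \in I -> (#|` [fset u in bad | adj u v]| < s0)%N.
Proof.
case: maxI => IU [stI _] vI; rewrite ltnNge; apply/negP => /fsubset_card_eq[S Sbad cardS].
have memS u : u \in S -> u \in bad /\ adj u v by move/(fsubsetP Sbad); rewrite inE => /andP.
set I0 := [fset w in I | all (fun u => ~~ adj u w) S].
have I_cover : I `<=` I0 `|` \bigcup_(u <- S) nbrs u.
  apply/fsubsetP => w wI; rewrite inE /I0 !inE /= wI /=.
  case: (boolP (all _ S)) => //=; rewrite -has_predC => /hasP[u uS /negPn uw].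
  by apply/bigfcupP; exists u; rewrite ?uS // !inE /= wI.
have sum_nbrs : (\sum_(u <- S) #|` nbrs u|)%:R <= s0%:R * (10 / (e * beta ^+ 2)) :> R.
  rewrite natr_sum -cardS mulrC -sumr_const_seq big_seq [leRHS]big_seq.
  by apply: ler_sum => u /memS[/card_nbrs_bad_le].
have S_P : S `<=` P.
  by apply/fsubsetP => u /memS[]; rewrite !inE /= => /andP[/andP[_ /(fsubsetP UP)]].
have := card_common_nonnbrs_lt (fsubset_trans IU UP) stI vI S_P (fun u uS => (memS u uS).2).
rewrite cardS -/I0 => /(_ s0_big) I0_small.
have : (#|` I| <= #|` I0| + \sum_(u <- S) #|` nbrs u|)%N.
  rewrite (leq_trans (fsubset_leq_card I_cover)) //.
  by rewrite (leq_trans (leq_card_fsetU _ _).1) // leq_add2l card_bigfcup_le.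
rewrite -(ler_nat R) natrD => I_le.
have : k0%:R <= #|` I|%:R :> R by rewrite ler_nat.
by have := k0_big; lra.
Qed.

Lemma card_bad_le : (#|` bad| <= s0 * #|` I|)%N.
Proof.
have bad_cover : bad `<=` \bigcup_(v <- I) [fset u in bad | adj u v].
  apply/fsubsetP => u ubad; move: (ubad); rewrite inE => /andP[uUI _].
  have [v vI uv] := max_independent_nbr uUI.
  by apply/bigfcupP; exists v; rewrite ?vI // !inE /= uv andbT; move: ubad; rewrite !inE.
rewrite (leq_trans (fsubset_leq_card bad_cover)) // (leq_trans (card_bigfcup_le _ _)) //.
have -> : (s0 * #|` I| = \sum_(v <- I) s0)%N.
  by rewrite big_const_seq count_predT iter_addn_0.
rewrite big_seq [leqRHS]big_seq.
by apply: leq_sum => v vI; apply/ltnW/card_bad_nbrs_lt.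
Qed.

Lemma card_good_ge :
  #|` U|%:R - (s0 + 1)%:R * #|` I|%:R <=
    #|` [fset u in U `\` I | (1 - e) * #|` I|%:R <= #|` nbrs u|%:R]|%:R :> R.
Proof.
case: maxI => IU _; set good := [fset u in U `\` I | _].
have bad_eq : (U `\` I) `\` good = bad.
  apply/fsetP => u; rewrite /good /bad !inE /= ltNge.
  by case: (u \in I); case: (u \in U); case: (_ <= _).
have card_UI : #|` U `\` I| = (#|` good| + #|` bad|)%N.
  by rewrite -(cardfsID good (U `\` I)) (fsetIidPr (fset_sub _ _)) bad_eq.
have := cardfsDS IU; have := fsubset_leq_card IU; have := card_bad_le.
rewrite lerBlDr -natrM -natrD ler_nat card_UI; lia.
Qed.

End ManyIndependent.

End MaxIndependent.

End SphericalCode.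

Unset Implicit Arguments.

Theorem lemma6 (R : realType) (beta delta : R) :
  0 < beta -> beta <= 1 -> 0 < delta ->
  exists M : R,
    forall (alpha : R) (d : nat) (P U I : {fset 'rV[R]_d}),
      0 < alpha -> alpha < 1 ->
      spherical_code_L beta alpha P ->
      U `<=` P ->
      max_independent_in beta U I ->
      exists U' : {fset 'rV[R]_d},
        U' `<=` U `\` I /\
        (#|` U|%:R - M * #|` I|%:R <= (#|` U'|%:R : R)) /\
        (forall u, u \in U' ->
           (1 - delta) * #|` I|%:R <= (#|` [fset v in I | adjG beta u v]|%:R : R)).
Proof.
move=> beta_gt0 beta_le1 delta_gt0; pose e := Num.min delta 1.
have e_gt0 : 0 < e by rewrite lt_min delta_gt0 ltr01.
have e_le1 : e <= 1 by rewrite ge_min lexx orbT.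
have e_le_delta : e <= delta by rewrite ge_min lexx.
have [s0 s0_big] : exists s0 : nat, 3 <= beta ^+ 2 * s0%:R.
  exists (Num.truncn (3 / beta ^+ 2)).+1.
  by rewrite mulrC -ler_pdivrMr ?exprn_gt0 //; apply/ltW/truncnS_gt.
have [k0 k0_big] : exists k0 : nat,
    s0%:R * (10 / (e * beta ^+ 2)) + (s0%:R + 1) ^+ 2 <= k0%:R.
  by eexists; apply/ltW/truncnS_gt.
have [T T_big] : exists T : nat, 1 < beta * (T%:R - 1).
  exists (Num.truncn (1 / beta)).+2.
  by rewrite -natr1 addrK mulrC -ltr_pdivrMr //; apply: truncnS_gt.
exists (2 ^ (T + k0) + s0 + 1)%:R => alpha d P U I alpha_gt0 _ codeP UP maxI.
have [I_small | I_big] := ltnP #|` I| k0.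
  exists fset0; split; first exact: fsub0set.
  split=> [|u]; last by rewrite inE.
  have := card_le_of_card_independent_lt beta_gt0 codeP UP maxI T_big I_small.
  rewrite cardfs0 subr_le0 -(ler_nat R) natrM => /le_trans; apply.
  by rewrite ler_wpM2r // ler_nat -addnA leq_addr.
exists [fset u in U `\` I | (1 - e) * #|` I|%:R <= #|` [fset v in I | adjG beta u v]|%:R].
split; first exact: fset_sub.
split=> [|u]; last first.
  by rewrite inE => /andP[_]; apply: le_trans; rewrite ler_wpM2r // lerD2l lerN2.
apply: le_trans (card_good_ge alpha_gt0 beta_gt0 beta_le1 codeP UP maxI e_gt0 e_le1 s0_big
  k0_big I_big); rewrite lerD2l lerN2 ler_wpM2r // ler_nat.
by rewrite leq_add2r leq_addl.
Qed.
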